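(* Let $P$ be any product rule with $P$-product $*$. Then $\overline{f*g}=\overline f*\overline g$ holds for all series $f,g$ if and only if for all series $f,g$ and all $b\in\Sigma$, \[\delta^R_b(f*g)=[\![P]\!]_{[x\mapsto f,\ \dot x\mapsto\delta^R_bf,\ y\mapsto g,\ \dot y\mapsto\delta^R_bg]}.\]
   Context: Let $\Sigma$ be a finite alphabet, $\Sigma^*$ the finite words with empty word $\varepsilon$. A series is $f:\Sigma^*\to\mathbb Q$, $f_w=f(w)$; series form a $\mathbb Q$-vector space under pointwise operations. For $a\in\Sigma$ the left derivative $\delta_af$ is $w\mapsto f(aw)$ and the right derivative $\delta^R_af$ is $w\mapsto f(wa)$. The reversal $\overline f$ of $f$ is $w\mapsto f(\overline w)$, where $\overline w$ is the mirror image of $w$. Terms over $X$: generated by $u,v::=x\mid 0\mid c\cdot u\mid u+v\mid u*v$. A product rule is a term $P$ over $\{x,\dot x,y,\dot y\}$. The $P$-product $*$ and semantics $[\![u]\!]_\varrho$ of terms under valuations $\varrho:X\to$ series are the unique pair with $(f*g)_\varepsilon=f_\varepsilon g_\varepsilon$, $\delta_a(f*g)=[\![P]\!]_{[x\mapsto f,\dot x\mapsto\delta_af,y\mapsto g,\dot y\mapsto\delta_ag]}$, and $[\![\cdot]\!]_\varrho$ interpreting variables via $\varrho$ and constructors by zero, scalar multiplication, addition, $*$. *)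

From mathcomp Require Import all_boot all_order all_algebra.
Set Implicit Arguments. Unset Strict Implicit. Unset Printing Implicit Defensive.
Import GRing.Theory Num.Theory.
Local Open Scope ring_scope.

Definition series (Sigma : finType) := seq Sigma -> rat.

Section Series.
Variable Sigma : finType.

Definition ldelta (a : Sigma) (f : series Sigma) : series Sigma :=
  fun w => f (a :: w).
Definition rdelta (a : Sigma) (f : series Sigma) : series Sigma :=
  fun w => f (rcons w a).
Definition srev (f : series Sigma) : series Sigma := fun w => f (rev w).

Definition szero : series Sigma := fun _ => 0.
Definition sscale (c : rat) (f : series Sigma) : series Sigma := fun w => c * f w.
Definition sadd (f g : series Sigma) : series Sigma := fun w => f w + g w.
End Series.

Inductive term (X : Type) : Type :=
| TVar of X
| TZero
| TScale of rat & term X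
| TAdd of term X & term X
| TMul of term X & term X.

Fixpoint sem (Sigma : finType) (X : Type)
    (mul : series Sigma -> series Sigma -> series Sigma)
    (rho : X -> series Sigma) (t : term X) : series Sigma :=
  match t with
  | TVar x => rho x
  | TZero => @szero Sigma
  | TScale c u => sscale c (sem mul rho u)
  | TAdd u v => sadd (sem mul rho u) (sem mul rho v)
  | TMul u v => mul (sem mul rho u) (sem mul rho v)
  end.

Inductive pvar : Type := Vx | Vxd | Vy | Vyd.

Definition product_rule := term pvar.

Definition val4 (Sigma : finType) (f f' g g' : series Sigma) : pvar -> series Sigma :=
  fun v => match v with Vx => f | Vxd => f' | Vy => g | Vyd => g' end.

(* Approximations: [pmul_k P k f g] is correct on words of length <= k. *)
Fixpoint pmul_k (Sigma : finType) (P : product_rule) (k : nat)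
    (f g : series Sigma) : series Sigma :=
  fun w =>
    match w with
    | [::] => f [::] * g [::]
    | a :: w' =>
        match k with
        | 0%N => 0
        | k'.+1 =>
            sem (pmul_k P k') (val4 f (ldelta a f) g (ldelta a g)) P w'
        end
    end.

(* The P-product: the unique operation with (f*g)_eps = f_eps g_eps and
   delta_a (f*g) = [[P]]_[x|->f, xdot|->delta_a f, y|->g, ydot|->delta_a g]. *)
Definition pmul (Sigma : finType) (P : product_rule) (f g : series Sigma)
  : series Sigma := fun w => pmul_k P (size w) f g w.

(* Reversal conjugates a product [mul] to its mirror [u, v |-> rev (mul (rev u) (rev v))],
   and turns right derivatives into left ones. Hence the right-derivative rule for the
   P-product is the left-derivative rule for its mirror. The P-product is the unique
   product with the left-derivative rule and [(f*g)_eps = f_eps g_eps] (by induction on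
   the length of words, since the rule only looks at shorter words), and the mirror
   clearly has the right constant term; so the right-derivative rule holds exactly when
   the mirror is the P-product itself, i.e. when reversal commutes with [*]. *)
From mathcomp Require Import all_boot all_algebra.
From Stdlib Require Import FunctionalExtensionality.
Set Implicit Arguments. Unset Strict Implicit. Unset Printing Implicit Defensive.
Local Open Scope ring_scope.

Section Series.
Variable Sigma : finType.
Implicit Types (f g u v : series Sigma) (mul : series Sigma -> series Sigma -> series Sigma).

Definition eq_upto n f g := forall w, (size w <= n)%N -> f w = g w.

Lemma eq_upto_trans n f g h : eq_upto n f g -> eq_upto n g h -> eq_upto n f h.
Proof. by move=> Hfg Hgh w hw; rewrite Hfg ?Hgh. Qed.

Lemma eq_upto_le m n f g : (m <= n)%N -> eq_upto n f g -> eq_upto m f g.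
Proof. by move=> hmn H w hw; apply: H; apply: leq_trans hw hmn. Qed.

Lemma sem_eq_upto (X : Type) n mul1 mul2 (rho1 rho2 : X -> series Sigma) (t : term X) :
  (forall u1 u2 v1 v2, eq_upto n u1 u2 -> eq_upto n v1 v2 ->
     eq_upto n (mul1 u1 v1) (mul2 u2 v2)) ->
  (forall x, eq_upto n (rho1 x) (rho2 x)) ->
  eq_upto n (sem mul1 rho1 t) (sem mul2 rho2 t).
Proof.
move=> Hmul Hrho; elim: t => [x||c u IH|u IHu v IHv|u IHu v IHv] //=.
- by move=> w hw; rewrite /sscale IH.
- by move=> w hw; rewrite /sadd IHu ?IHv.
- exact: Hmul.
Qed.

Lemma mul_ext mul1 mul2 : (forall f g w, mul1 f g w = mul2 f g w) -> mul1 = mul2.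
Proof.
move=> E; apply: functional_extensionality => f; apply: functional_extensionality => g.
exact: functional_extensionality (E f g).
Qed.

Definition mirror mul u v := srev (mul (srev u) (srev v)).

Lemma srevK : involutive (@srev Sigma).
Proof. by move=> f; apply: functional_extensionality => w; rewrite /srev revK. Qed.

Lemma srev_rdelta b f : srev (rdelta b f) = ldelta b (srev f).
Proof. by apply: functional_extensionality => w; rewrite /srev /rdelta /ldelta rev_cons. Qed.

Lemma srev_sem (X : Type) mul (rho : X -> series Sigma) (t : term X) :
  srev (sem mul rho t) = sem (mirror mul) (fun x => srev (rho x)) t.
Proof.
elim: t => [x||c u IH|u IHu v IHv|u IHu v IHv] //=; rewrite -?IH -?IHu -?IHv //.
by rewrite /mirror !srevK.
Qed.

Lemma srev_val4 f f' g g' :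
  (fun x => srev (val4 f f' g g' x)) = val4 (srev f) (srev f') (srev g) (srev g').
Proof. by apply: functional_extensionality; case. Qed.

Variable P : product_rule.

Definition ldelta_rule mul := forall a f g,
  ldelta a (mul f g) = sem mul (val4 f (ldelta a f) g (ldelta a g)) P.

Definition rdelta_rule mul := forall b f g,
  rdelta b (mul f g) = sem mul (val4 f (rdelta b f) g (rdelta b g)) P.

Lemma rdelta_rule_mirror mul : rdelta_rule mul <-> ldelta_rule (mirror mul).
Proof.
have srev_rule b f g : srev (sem mul (val4 f (rdelta b f) g (rdelta b g)) P) =
    sem (mirror mul) (val4 (srev f) (ldelta b (srev f)) (srev g) (ldelta b (srev g))) P.
  by rewrite srev_sem srev_val4 !srev_rdelta.
split=> [Hr a f g | Hl b f g].
- by rewrite /mirror -srev_rdelta Hr srev_rule !srevK.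
- apply: (can_inj srevK); rewrite srev_rule srev_rdelta -Hl.
  by rewrite /mirror !srevK.
Qed.

Lemma pmul_k_nil k f g : pmul_k P k f g [::] = f [::] * g [::].
Proof. by case: k. Qed.

Lemma pmul_k_eq_upto n : forall k1 k2 f1 f2 g1 g2, (n <= k1)%N -> (n <= k2)%N ->
  eq_upto n f1 f2 -> eq_upto n g1 g2 -> eq_upto n (pmul_k P k1 f1 g1) (pmul_k P k2 f2 g2).
Proof.
elim: n => [|n IH] [|k1] [|k2] f1 f2 g1 g2 // h1 h2 Hf Hg [|a w] hw //;
  rewrite ?pmul_k_nil ?Hf ?Hg //=.
apply: (sem_eq_upto (n := n)) hw => [u1 u2 v1 v2|]; first exact: IH.
by case=> w' hw'; [apply: Hf | apply: Hf | apply: Hg | apply: Hg] => //; exact: leqW.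
Qed.

Lemma pmul_eq_upto n f1 f2 g1 g2 : eq_upto n f1 f2 -> eq_upto n g1 g2 ->
  eq_upto n (pmul P f1 g1) (pmul P f2 g2).
Proof.
move=> Hf Hg w hw; apply: (pmul_k_eq_upto (n := size w)) => //; exact: eq_upto_le hw _.
Qed.

Lemma ldelta_pmul : ldelta_rule (pmul P).
Proof.
move=> a f g; apply: functional_extensionality => w.
apply: (sem_eq_upto (n := size w)) => // u1 u2 v1 v2 Hu Hv w' hw'.
by apply: (pmul_k_eq_upto (n := size w')) => //; [apply: eq_upto_le hw' Hu
                                                 | apply: eq_upto_le hw' Hv].
Qed.

Lemma pmul_unique mul : (forall f g, mul f g [::] = f [::] * g [::]) ->
  ldelta_rule mul -> mul = pmul P.
Proof.
move=> Hnil Hl.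
suff agree n f g : eq_upto n (mul f g) (pmul P f g).
  by apply: mul_ext => f g w; apply: (agree (size w)).
elim: n f g => [|n IH] f g [|a w] hw //; rewrite ?Hnil //.
rewrite -[mul f g (a :: w)]/(ldelta a (mul f g) w) -[pmul P f g _]/(ldelta a _ w).
rewrite Hl ldelta_pmul; apply: (sem_eq_upto (n := n)) hw => // u1 u2 v1 v2 Hu Hv.
exact: eq_upto_trans (IH u1 v1) (pmul_eq_upto Hu Hv).
Qed.

Lemma mirror_pmul_nil f g : mirror (pmul P) f g [::] = f [::] * g [::].
Proof. by []. Qed.

End Series.

Theorem mainTheorem15 (Sigma : finType) (P : product_rule) :
  (forall f g : series Sigma,
     forall w, srev (pmul P f g) w = pmul P (srev f) (srev g) w) <->
  (forall (f g : series Sigma) (b : Sigma),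
     forall w, rdelta b (pmul P f g) w =
       sem (pmul P) (val4 f (rdelta b f) g (rdelta b g)) P w).
Proof.
split=> [Hrev | Hr].
- have mirror_pmul : mirror (@pmul Sigma P) = pmul P.
    by apply: mul_ext => f g w; rewrite /mirror Hrev !srevK.
  have /rdelta_rule_mirror Hr : ldelta_rule P (mirror (@pmul Sigma P)).
    by rewrite mirror_pmul; exact: ldelta_pmul.
  by move=> f g b w; rewrite Hr.
- have Hl : ldelta_rule P (mirror (@pmul Sigma P)).
    by apply/rdelta_rule_mirror => b f g; apply: functional_extensionality; apply: Hr.
  have mirror_pmul := pmul_unique (mirror_pmul_nil P) Hl.
  by move=> f g w; rewrite -[in RHS]mirror_pmul /mirror !srevK.
Qed.
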